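(* Let $R_1,R_2\in\mathrm{DGRings}^{0,-1}$ and let $\alpha$ be an admissible correspondence $R_1\xleftarrow{f}R_{12}\xrightarrow{g}R_2$. (i) Let $\mathrm{adm}^{-1}(\alpha)$ be the set of isomorphism classes of pairs consisting of $\varphi\in\mathrm{Hom}(R_1,R_2)$ and an isomorphism $\mathrm{adm}(\varphi)\xrightarrow{\sim}\alpha$. Then $\mathrm{adm}^{-1}(\alpha)$ canonically identifies with the set of splittings $\{s:R_1\to R_{12}\mid f\circ s=\mathrm{id}_{R_1}\}$ (morphisms in $\mathrm{DGRings}^{0,-1}$). Under this identification the map $\mathrm{adm}^{-1}(\alpha)\to\mathrm{Hom}(R_1,R_2)$ is $s\mapsto g\circ s$. (ii) The map $s\mapsto s^0$ from the set of such splittings $s$ to the set of ring homomorphisms $\sigma:R_1^0\to R_{12}^0$ with $f^0\circ\sigma=\mathrm{id}_{R_1^0}$ is bijective.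
   Context: Rings are commutative and unital. $\mathrm{DGRings}^{0,-1}$ is the category of commutative DG rings $R$ with $R^i=0$ for $i\ne 0,-1$. Equivalently, such $R$ is a ring $R^0$, an $R^0$-module $R^{-1}$ and an $R^0$-linear $d:R^{-1}\to R^0$ with $d(x)y=d(y)x$. Quasi-isomorphisms are morphisms inducing isomorphisms on $\ker d$ and $\operatorname{coker} d$. A correspondence is a diagram $R_1\xleftarrow{f}R_{12}\xrightarrow{g}R_2$ in $\mathrm{DGRings}^{0,-1}$. Morphisms of correspondences are maps $h$ of middle terms with $f'h=f$, $g'h=g$. A correspondence is admissible if $f$ is a quasi-isomorphism and $R_{12}^{-1}\to R_1^{-1}\times R_2^{-1}$ is an isomorphism. It is an anamorphism if $f$ is a surjective quasi-isomorphism. $\mathrm{Corr}_{\mathrm{adm}}(R_1,R_2)\subset\mathrm{Corr}_{\mathrm{ana}}(R_1,R_2)$ denote the full subcategories. $\mathrm{Adm}$ is the left adjoint to the inclusion (admissibilization). The map $\mathrm{adm}:\mathrm{Hom}(R_1,R_2)\to\mathrm{Corr}_{\mathrm{adm}}(R_1,R_2)$ sends $\varphi$ to $\mathrm{Adm}$ of the correspondence $R_1\xleftarrow{\mathrm{id}}R_1\xrightarrow{\varphi}R_2$. *)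

From HB Require Import structures.
From mathcomp Require Import all_boot all_order all_algebra.
Set Implicit Arguments. Unset Strict Implicit. Unset Printing Implicit Defensive.
Import GRing.Theory.
Local Open Scope ring_scope.

(* An object of DGRings^{0,-1}: a commutative ring R^0 (the zero ring is
   allowed), an R^0-module R^{-1} and an R^0-linear d : R^{-1} -> R^0 with
   d(x) y = d(y) x. *)
Record DGR := {
  dg0 : comPzRingType;
  dg1 : lmodType dg0;
  dgd : dg1 -> dg0;
  dgd_add : forall x y : dg1, dgd (x + y) = dgd x + dgd y;
  dgd_scale : forall (a : dg0) (x : dg1), dgd (a *: x) = a * dgd x;
  dgd_comm : forall x y : dg1, dgd x *: y = dgd y *: x }.

Record dghom (R S : DGR) := {
  h0 : dg0 R -> dg0 S;
  h1 : dg1 R -> dg1 S;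
  h0_1 : h0 1 = 1;
  h0_D : forall a b, h0 (a + b) = h0 a + h0 b;
  h0_M : forall a b, h0 (a * b) = h0 a * h0 b;
  h1_D : forall x y, h1 (x + y) = h1 x + h1 y;
  h1_Z : forall a x, h1 (a *: x) = h0 a *: h1 x;
  h_d : forall x, @dgd S (h1 x) = h0 (@dgd R x) }.

Definition homeq (R S : DGR) (p q : dghom R S) : Prop :=
  (forall a, h0 p a = h0 q a) /\ (forall x, h1 p x = h1 q x).

Definition idhom (R : DGR) : dghom R R.
Proof.
refine (@Build_dghom R R id id _ _ _ _ _ _); by [].
Defined.

Definition dgcomp (R S T : DGR) (q : dghom S T) (p : dghom R S) : dghom R T.
Proof.
refine (@Build_dghom R T (fun a => h0 q (h0 p a)) (fun x => h1 q (h1 p x)) _ _ _ _ _ _).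
- by rewrite !h0_1.
- by move=> a b; rewrite !h0_D.
- by move=> a b; rewrite !h0_M.
- by move=> x y; rewrite !h1_D.
- by move=> a x; rewrite !h1_Z.
- by move=> x; rewrite !h_d.
Defined.

Definition is_rhom (A B : comPzRingType) (s : A -> B) : Prop :=
  s 1 = 1 /\ (forall a b, s (a + b) = s a + s b) /\ (forall a b, s (a * b) = s a * s b).

(* Quasi-isomorphism: induces a bijection ker d -> ker d and coker d -> coker d. *)
Definition qiso (R S : DGR) (p : dghom R S) : Prop :=
  (forall x y, @dgd R x = 0 -> @dgd R y = 0 -> h1 p x = h1 p y -> x = y) /\
  (forall y, @dgd S y = 0 -> exists x, @dgd R x = 0 /\ h1 p x = y) /\
  (* on coker d = R^0 / d(R^{-1}) *)
  (forall a b, (exists y, h0 p a - h0 p b = @dgd S y) -> exists x, a - b = @dgd R x) /\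
  (forall b, exists a y, b = h0 p a + @dgd S y).

Definition surj_hom (R S : DGR) (p : dghom R S) : Prop :=
  (forall b, exists a, h0 p a = b) /\ (forall y, exists x, h1 p x = y).

Record corr (R1 R2 : DGR) := { cm : DGR; cf : dghom cm R1; cg : dghom cm R2 }.

Record cmor (R1 R2 : DGR) (c c' : corr R1 R2) := {
  mid : dghom (cm c) (cm c');
  mid_f : homeq (dgcomp (cf c') mid) (cf c);
  mid_g : homeq (dgcomp (cg c') mid) (cg c) }.

Definition admissible (R1 R2 : DGR) (c : corr R1 R2) : Prop :=
  qiso (cf c) /\
  (forall x y, h1 (cf c) x = h1 (cf c) y -> h1 (cg c) x = h1 (cg c) y -> x = y) /\
  (forall (x1 : dg1 R1) (x2 : dg1 R2), exists x, h1 (cf c) x = x1 /\ h1 (cg c) x = x2).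

Definition anamorphism (R1 R2 : DGR) (c : corr R1 R2) : Prop :=
  qiso (cf c) /\ surj_hom (cf c).

Definition is_iso (R1 R2 : DGR) (c c' : corr R1 R2) (u : cmor c c') : Prop :=
  exists v : cmor c' c,
    homeq (dgcomp (mid v) (mid u)) (idhom (cm c)) /\
    homeq (dgcomp (mid u) (mid v)) (idhom (cm c')).

(* Reflection of an (anamorphism) correspondence c into Corr_adm: an
   admissible correspondence Adm(c) with a universal unit c -> Adm(c).
   A left adjoint Adm to the inclusion Corr_adm -> Corr_ana is the same as
   such a reflection for every anamorphism c. *)
Record reflection (R1 R2 : DGR) (c : corr R1 R2) := {
  rA : corr R1 R2;
  rA_adm : admissible rA;
  reta : cmor c rA;
  runiv : forall (B : corr R1 R2), admissible B -> forall k : cmor c B,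
     exists u : cmor rA B,
       homeq (dgcomp (mid u) (mid reta)) (mid k) /\
       forall u' : cmor rA B, homeq (dgcomp (mid u') (mid reta)) (mid k) ->
         homeq (mid u) (mid u') }.

Definition c_id (R1 R2 : DGR) (phi : dghom R1 R2) : corr R1 R2 :=
  {| cm := R1; cf := idhom R1; cg := phi |}.

Lemma cid_ana (R1 R2 : DGR) (phi : dghom R1 R2) : anamorphism (c_id phi).
Proof.
rewrite /anamorphism /qiso /surj_hom /=.
split; [split; [|split; [|split]]|split].
- by move=> x y _ _.
- by move=> y Hy; exists y.
- by move=> a b [y Hy]; exists y.
- by move=> b; exists b, 0; rewrite -(scale0r (0 : dg1 R1)) dgd_scale mul0r addr0.
- by move=> b; exists b.
- by move=> y; exists y.
Qed.

Definition AdmT (R1 R2 : DGR) := forall c : corr R1 R2, anamorphism c -> reflection c.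

Definition adm (R1 R2 : DGR) (Adm : AdmT R1 R2) (phi : dghom R1 R2) : reflection (c_id phi) :=
  Adm (c_id phi) (cid_ana phi).

Record admfib (R1 R2 : DGR) (Adm : AdmT R1 R2) (alpha : corr R1 R2) := {
  af_phi : dghom R1 R2;
  af_u : cmor (rA (adm Adm af_phi)) alpha;
  af_iso : is_iso af_u }.

(* Isomorphism of objects of the fibre: phi = phi' (Hom(R1,R2) is a set,
   viewed as a discrete category) and u' o adm(id) = u, where adm(id) is the
   morphism adm(phi) -> adm(phi') induced by the identity. *)
Definition fib_iso (R1 R2 : DGR) (Adm : AdmT R1 R2) (alpha : corr R1 R2)
  (p q : admfib Adm alpha) : Prop :=
  homeq (af_phi p) (af_phi q) /\
  exists w : cmor (rA (adm Adm (af_phi p))) (rA (adm Adm (af_phi q))),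
    homeq (dgcomp (mid w) (mid (reta (adm Adm (af_phi p)))))
          (mid (reta (adm Adm (af_phi q)))) /\
    homeq (dgcomp (mid (af_u q)) (mid w)) (mid (af_u p)).

Definition fib_splitting (R1 R2 : DGR) (Adm : AdmT R1 R2) (alpha : corr R1 R2)
  (p : admfib Adm alpha) : dghom R1 (cm alpha) :=
  dgcomp (mid (af_u p)) (mid (reta (adm Adm (af_phi p)))).

Definition splitting (R1 R2 : DGR) (alpha : corr R1 R2) (s : dghom R1 (cm alpha)) : Prop :=
  homeq (dgcomp (cf alpha) s) (idhom R1).

(* A morphism between admissible correspondences is an isomorphism: on
   degree -1 it is bijective because both middle terms map isomorphically
   onto R1^{-1} x R2^{-1}, and on degree 0 because both legs to R1 are
   quasi-isomorphisms.  Hence an object (phi, u) of adm^{-1}(alpha) is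
   determined up to isomorphism by the morphism of correspondences
   u o eta : (R1 <- R1 -> R2) -> alpha, i.e. by its middle term, which is a
   splitting s of f with phi = g o s; conversely every splitting s defines
   such a morphism, which factors through adm(g o s) by universality.
   For (ii): since f is a quasi-isomorphism that is surjective in degree -1,
   an element x of R1^{-1} has exactly one lift y with d y = sigma (d x). *)

From HB Require Import structures.
From mathcomp Require Import all_boot all_order all_algebra.
From Stdlib Require Import IndefiniteDescription.
Set Implicit Arguments. Unset Strict Implicit. Unset Printing Implicit Defensive.
Import GRing.Theory.
Local Open Scope ring_scope.

Lemma add_homB (V W : zmodType) (F : V -> W) :
  (forall a b, F (a + b) = F a + F b) -> forall a b, F (a - b) = F a - F b.
Proof. by move=> FD a b; apply/eqP; rewrite eq_sym subr_eq -FD subrK. Qed.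

Lemma add_hom0 (V W : zmodType) (F : V -> W) :
  (forall a b, F (a + b) = F a + F b) -> F 0 = 0.
Proof. by move=> FD; rewrite -(subrr 0) (add_homB FD) subrr. Qed.

Section DGRingLemmas.

Variables R S : DGR.

Lemma dgd0 : @dgd R 0 = 0. Proof. exact: (@add_hom0 _ _ _ (@dgd_add R)). Qed.
Lemma dgdB (x y : dg1 R) : dgd (x - y) = dgd x - dgd y.
Proof. exact: (@add_homB _ _ _ (@dgd_add R)). Qed.

Variable p : dghom R S.

Lemma h0_0 : h0 p 0 = 0. Proof. exact: (@add_hom0 _ _ _ (h0_D p)). Qed.
Lemma h0B a b : h0 p (a - b) = h0 p a - h0 p b. Proof. exact: (@add_homB _ _ _ (h0_D p)). Qed.
Lemma h1_0 : h1 p 0 = 0. Proof. exact: (@add_hom0 _ _ _ (h1_D p)). Qed.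
Lemma h1B x y : h1 p (x - y) = h1 p x - h1 p y. Proof. exact: (@add_homB _ _ _ (h1_D p)). Qed.

End DGRingLemmas.

Lemma homeq_refl (R S : DGR) (p : dghom R S) : homeq p p.
Proof. by []. Qed.

Lemma homeq_sym (R S : DGR) (p q : dghom R S) : homeq p q -> homeq q p.
Proof. by case=> E0 E1; split=> ?. Qed.

Lemma homeq_trans (R S : DGR) (p q r : dghom R S) :
  homeq p q -> homeq q r -> homeq p r.
Proof. by case=> E0 E1 [F0 F1]; split=> ?; rewrite ?E0 ?E1. Qed.

Lemma homeq_comp (R S T : DGR) (p p' : dghom R S) (q q' : dghom S T) :
  homeq q q' -> homeq p p' -> homeq (dgcomp q p) (dgcomp q' p').
Proof. by case=> Eq0 Eq1 [Ep0 Ep1]; split=> ? /=; rewrite ?Ep0 ?Ep1 ?Eq0 ?Eq1. Qed.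

Lemma homeq_compA (R S T U : DGR) (p : dghom R S) (q : dghom S T) (r : dghom T U) :
  homeq (dgcomp r (dgcomp q p)) (dgcomp (dgcomp r q) p).
Proof. by []. Qed.

Lemma homeq_comp_idl (R S : DGR) (p : dghom R S) : homeq (dgcomp (idhom S) p) p.
Proof. by []. Qed.

Lemma homeq_comp_inv (A B S : DGR) (m : dghom A B) (v : dghom B A)
    (fA : dghom A S) (fB : dghom B S) :
  homeq (dgcomp fB m) fA -> homeq (dgcomp m v) (idhom B) -> homeq (dgcomp fA v) fB.
Proof.
case=> fm0 fm1 [mv0 mv1]; split=> b /=.
- by rewrite -fm0 /=; congr (h0 fB _); apply: mv0.
- by rewrite -fm1 /=; congr (h1 fB _); apply: mv1.
Qed.

Definition cmor_comp (R1 R2 : DGR) (c1 c2 c3 : corr R1 R2)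
    (q : cmor c2 c3) (p : cmor c1 c2) : cmor c1 c3 :=
  Build_cmor
    (homeq_trans (homeq_compA _ _ _) (homeq_trans (homeq_comp (mid_f q) (homeq_refl _)) (mid_f p)))
    (homeq_trans (homeq_compA _ _ _) (homeq_trans (homeq_comp (mid_g q) (homeq_refl _)) (mid_g p))).

Lemma dghom_bij_inv (A B : DGR) (u : dghom A B) :
  injective (h0 u) -> (forall b, exists a, h0 u a = b) ->
  injective (h1 u) -> (forall y, exists x, h1 u x = y) ->
  exists v : dghom B A, homeq (dgcomp v u) (idhom A) /\ homeq (dgcomp u v) (idhom B).
Proof.
move=> inj0 surj0 inj1 surj1.
have [g0 g0K] := functional_choice _ surj0.
have [g1 g1K] := functional_choice _ surj1.
have g0_1 : g0 1 = 1 by apply: inj0; rewrite g0K h0_1.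
have g0_D a b : g0 (a + b) = g0 a + g0 b by apply: inj0; rewrite g0K h0_D !g0K.
have g0_M a b : g0 (a * b) = g0 a * g0 b by apply: inj0; rewrite g0K h0_M !g0K.
have g1_D x y : g1 (x + y) = g1 x + g1 y by apply: inj1; rewrite g1K h1_D !g1K.
have g1_Z a x : g1 (a *: x) = g0 a *: g1 x by apply: inj1; rewrite g1K h1_Z g0K g1K.
have g_d x : dgd (g1 x) = g0 (dgd x) by apply: inj0; rewrite g0K -h_d g1K.
exists (Build_dghom g0_1 g0_D g0_M g1_D g1_Z g_d).
by split; split=> ? /=; [apply: inj0 | apply: inj1 | |].
Qed.

Section QuasiIsomorphism.

Variables (R S : DGR) (f : dghom R S).
Hypothesis f_qiso : qiso f.

Lemma qiso_h1_inj_dgd (y y' : dg1 R) :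
  h1 f y = h1 f y' -> dgd y = dgd y' -> y = y'.
Proof.
case: f_qiso => ker_inj _ Ef Ed; apply/eqP; rewrite -subr_eq0; apply/eqP.
by apply: ker_inj; rewrite ?dgdB ?Ed ?subrr ?dgd0 ?h1B ?Ef ?subrr ?h1_0.
Qed.

Hypothesis f1_surj : forall z : dg1 S, exists y, h1 f y = z.

Lemma qiso_h1_lift (z : dg1 S) (b : dg0 R) :
  h0 f b = dgd z -> exists y, h1 f y = z /\ dgd y = b.
Proof.
case: f_qiso => _ [ker_surj [coker_inj _]] fb.
have [y0 fy0] := f1_surj z.
have [w dw] : exists w, dgd y0 - b - 0 = dgd w.
  by apply: coker_inj; exists 0; rewrite h0_0 dgd0 !subr0 h0B -h_d fy0 fb subrr.
have [w' [dw' fw']] : exists w', dgd w' = 0 /\ h1 f w' = h1 f w.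
  by apply: ker_surj; rewrite h_d -dw subr0 h0B -h_d fy0 fb subrr.
exists (y0 - (w - w')); split; first by rewrite !h1B fw' subrr subr0.
by rewrite !dgdB dw' subr0 -dw subr0 opprB addrC subrK.
Qed.

Lemma qiso_section_unique (s s' : dghom S R) :
  homeq (dgcomp f s) (idhom S) -> homeq (dgcomp f s') (idhom S) ->
  (forall a, h0 s a = h0 s' a) -> homeq s s'.
Proof.
move=> [_ fs1] [_ fs'1] E; split=> // x.
apply: qiso_h1_inj_dgd; last by rewrite !h_d E.
by move: (fs1 x) (fs'1 x) => /= -> ->.
Qed.

Lemma qiso_ring_section_lift (sigma : dg0 S -> dg0 R) :
  is_rhom sigma -> (forall a, h0 f (sigma a) = a) ->
  exists s : dghom S R, homeq (dgcomp f s) (idhom S) /\ forall a, h0 s a = sigma a.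
Proof.
move=> [sigma_1 [sigma_D sigma_M]] sigmaK.
have lift x : exists y, h1 f y = x /\ dgd y = sigma (dgd x).
  by apply: qiso_h1_lift; rewrite sigmaK.
have [t tK] := functional_choice _ lift.
have t_D x y : t (x + y) = t x + t y.
  apply: qiso_h1_inj_dgd; first by rewrite h1_D !(proj1 (tK _)).
  by rewrite dgd_add !(proj2 (tK _)) dgd_add sigma_D.
have t_Z a x : t (a *: x) = sigma a *: t x.
  apply: qiso_h1_inj_dgd; first by rewrite h1_Z sigmaK !(proj1 (tK _)).
  by rewrite dgd_scale !(proj2 (tK _)) dgd_scale sigma_M.
exists (Build_dghom sigma_1 sigma_D sigma_M t_D t_Z (fun x => proj2 (tK x))).
by split=> //; split=> ? /=; [apply: sigmaK | apply: (proj1 (tK _))].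
Qed.

End QuasiIsomorphism.

Section QuasiIsomorphismTriangle.

Variables (A C R : DGR) (fA : dghom A R) (fC : dghom C R) (m : dghom A C).
Hypotheses (fA_qiso : qiso fA) (fC_qiso : qiso fC).
Hypothesis fm : homeq (dgcomp fC m) fA.
Hypothesis m1_inj : injective (h1 m).

Lemma qiso_triangle_h0_inj : injective (h0 m).
Proof.
case: fA_qiso => _ [ker_surj [coker_inj _]]; case: fm => fm0 fm1 a b Em.
have [x dx] : exists x, a - b = dgd x.
  by apply: coker_inj; exists 0; rewrite -!fm0 /= Em subrr dgd0.
have dmx : dgd (h1 m x) = 0 by rewrite h_d -dx h0B Em subrr.
have [x' [dx' fx']] : exists x', dgd x' = 0 /\ h1 fA x' = h1 fA x.
  by apply: ker_surj; rewrite -fm1 /= h_d dmx h0_0.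
have xx' : x' = x.
  apply: m1_inj; apply: (qiso_h1_inj_dgd fC_qiso); last by rewrite dmx h_d dx' h0_0.
  by move: (fm1 x) (fm1 x') => /= -> ->.
by apply/eqP; rewrite -subr_eq0 dx -xx' dx'.
Qed.

Hypotheses (m1_surj : forall y, exists x, h1 m x = y)
           (fC1_surj : forall z, exists y, h1 fC y = z).

Lemma qiso_triangle_h0_surj (e : dg0 C) : exists a, h0 m a = e.
Proof.
case: fA_qiso => _ [_ [_ coker_surj]]; case: fC_qiso => _ [_ [coker_inj _]].
case: fm => /= fm0 _.
have [a [z fe]] := coker_surj (h0 fC e).
have [y fy] := fC1_surj z.
have [w dw] : exists w, e - h0 m a - dgd y - 0 = dgd w.
  apply: coker_inj; exists 0.
  rewrite !h0B h0_0 -h_d fy (fm0 a) fe dgd0 !subr0.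
  by rewrite [h0 fA a + _]addrC addrK subrr.
have [x mx] := m1_surj (y + w).
exists (a + dgd x); rewrite h0_D -h_d mx dgd_add -dw subr0.
by rewrite [dgd y + _]addrC subrK addrC subrK.
Qed.

End QuasiIsomorphismTriangle.

Lemma admissible_cf1_surj (R1 R2 : DGR) (c : corr R1 R2) :
  admissible c -> forall z, exists y, h1 (cf c) y = z.
Proof. by case=> _ [_ fg_surj] z; have [y [fy _]] := fg_surj z 0; exists y. Qed.

Lemma admissible_cmor_is_iso (R1 R2 : DGR) (c c' : corr R1 R2) (u : cmor c c') :
  admissible c -> admissible c' -> is_iso u.
Proof.
move=> c_adm c'_adm; have f'1_surj := admissible_cf1_surj c'_adm.
case: c_adm c'_adm => [fq [fg_inj fg_surj]] [fq' [fg_inj' _]].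
case: u => m mf mg /=.
have m1_inj : injective (h1 m).
  move=> x y E; apply: fg_inj.
  - by rewrite -(mf.2 x) -(mf.2 y) /= E.
  - by rewrite -(mg.2 x) -(mg.2 y) /= E.
have m1_surj y : exists x, h1 m x = y.
  have [x [fx gx]] := fg_surj (h1 (cf c') y) (h1 (cg c') y).
  exists x; apply: fg_inj'; [rewrite -fx; exact: mf.2 | rewrite -gx; exact: mg.2].
have [v [vm mv]] := dghom_bij_inv (qiso_triangle_h0_inj fq fq' mf m1_inj)
  (qiso_triangle_h0_surj fq fq' mf m1_surj f'1_surj) m1_inj m1_surj.
have vf := homeq_comp_inv mf mv.
have vg := homeq_comp_inv mg mv.
by exists (Build_cmor vf vg).
Qed.

Section Fibre.

Variables (R1 R2 : DGR) (alpha : corr R1 R2) (Adm : AdmT R1 R2).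

Definition fib_cmor (p : admfib Adm alpha) : cmor (c_id (af_phi p)) alpha :=
  cmor_comp (af_u p) (reta (adm Adm (af_phi p))).

Lemma fib_splitting_splitting (p : admfib Adm alpha) : splitting (fib_splitting p).
Proof. exact: mid_f (fib_cmor p). Qed.

Lemma fib_phi_comp (p : admfib Adm alpha) :
  homeq (af_phi p) (dgcomp (cg alpha) (fib_splitting p)).
Proof. exact: homeq_sym (mid_g (fib_cmor p)). Qed.

Lemma fib_iso_splitting (p q : admfib Adm alpha) :
  fib_iso p q -> homeq (fib_splitting p) (fib_splitting q).
Proof.
case=> _ [w [weta uw]].
apply: homeq_trans (homeq_comp (homeq_sym uw) (homeq_refl _)) _.
apply: homeq_trans (homeq_sym (homeq_compA _ _ _)) _.
exact: homeq_comp (homeq_refl _) weta.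
Qed.

Lemma splitting_fib_iso (p q : admfib Adm alpha) :
  homeq (fib_splitting p) (fib_splitting q) -> fib_iso p q.
Proof.
move=> spq; split.
  apply: homeq_trans (fib_phi_comp p) _.
  exact: homeq_trans (homeq_comp (homeq_refl _) spq) (homeq_sym (fib_phi_comp q)).
case: (af_iso q) => v [vu uv]; exists (cmor_comp v (af_u p)); split.
- apply: homeq_trans (homeq_sym (homeq_compA _ _ _)) _.
  apply: homeq_trans (homeq_comp (homeq_refl _) spq) _.
  apply: homeq_trans (homeq_compA _ _ _) _.
  exact: homeq_trans (homeq_comp vu (homeq_refl _)) (homeq_comp_idl _).
- apply: homeq_trans (homeq_compA _ _ _) _.
  exact: homeq_trans (homeq_comp uv (homeq_refl _)) (homeq_comp_idl _).
Qed.

Definition splitting_cmor (s : dghom R1 (cm alpha)) (s_split : splitting s) :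
  cmor (c_id (dgcomp (cg alpha) s)) alpha :=
  @Build_cmor _ _ (c_id (dgcomp (cg alpha) s)) alpha s s_split (homeq_refl _).

Lemma splitting_fib (s : dghom R1 (cm alpha)) :
  admissible alpha -> splitting s -> exists p : admfib Adm alpha, homeq (fib_splitting p) s.
Proof.
move=> alpha_adm s_split.
have [u [ueta _]] := runiv (adm Adm (dgcomp (cg alpha) s)) alpha_adm (splitting_cmor s_split).
by exists {| af_u := u; af_iso := admissible_cmor_is_iso u (rA_adm _) alpha_adm |}.
Qed.

End Fibre.

Unset Implicit Arguments.
Theorem lemma4p3p6 (R1 R2 : DGR) (alpha : corr R1 R2) (Halpha : admissible alpha)
  (Adm : AdmT R1 R2) :
  (* (i) adm^{-1}(alpha) identifies with the splittings of f, and the map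
     adm^{-1}(alpha) -> Hom(R1,R2) becomes s |-> g o s *)
  ((forall p : admfib Adm alpha, splitting (fib_splitting p)) /\
   (forall p q : admfib Adm alpha,
      fib_iso p q <-> homeq (fib_splitting p) (fib_splitting q)) /\
   (forall s : dghom R1 (cm alpha), splitting s ->
      exists p : admfib Adm alpha, homeq (fib_splitting p) s) /\
   (forall p : admfib Adm alpha,
      homeq (af_phi p) (dgcomp (cg alpha) (fib_splitting p)))) /\
  (* (ii) s |-> s^0 is a bijection onto ring sections of f^0 *)
  ((forall s s' : dghom R1 (cm alpha), splitting s -> splitting s' ->
      (forall a, h0 s a = h0 s' a) -> homeq s s') /\
   (forall sigma : dg0 R1 -> dg0 (cm alpha), is_rhom sigma ->
      (forall a, h0 (cf alpha) (sigma a) = a) ->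
      exists s : dghom R1 (cm alpha), splitting s /\ forall a, h0 s a = sigma a)).
Proof.
have f_qiso := proj1 Halpha.
split; [split; [|split; [|split]] | split].
- exact: fib_splitting_splitting.
- by move=> p q; split; [apply: fib_iso_splitting | apply: splitting_fib_iso].
- by move=> s; apply: splitting_fib.
- exact: fib_phi_comp.
- exact: qiso_section_unique.
- exact: qiso_ring_section_lift (admissible_cf1_surj Halpha).
Qed.
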